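(* Let $(S,\to)$ be a labelled transition system with a merge $\|$. If $s\leftrightarrow_b^{\Delta}t$ and $u\leftrightarrow_b^{\Delta}v$, then $s\|u\leftrightarrow_b^{\Delta}t\|v$.
   Context: Fix a set $\mathrm{Act}$ of actions containing a special action $\tau$. A labelled transition system (LTS) is a pair $(S,\to)$ with $S$ a set of states and $\to\subseteq S\times\mathrm{Act}\times S$; write $s\xrightarrow{a}s'$ for $(s,a,s')\in\to$. A path from $s$ is an alternating sequence $s_0,a_1,s_1,a_2,\dots$ of states and actions, ending with a state if finite, with $s_0=s$ and $s_{k-1}\xrightarrow{a_k}s_k$ for all relevant $k$. A colouring is a function $\mathcal{C}$ from $S$ to an arbitrary set of colours. For a path $\pi=s_0,a_1,s_1,\dots$, $\mathcal{C}(\pi)$ is the alternating sequence obtained from $\mathcal{C}(s_0),a_1,\mathcal{C}(s_1),a_2,\dots$ by contracting every finite maximal consecutive subsequence of the form $C,\tau,C,\tau,\dots,\tau,C$ and every infinite maximal consecutive subsequence $C,\tau,C,\tau,\dots$ to $C$. The sequences $\mathcal{C}(\pi)$ with $\pi$ a path from $s$ are the $\mathcal{C}$-coloured traces of $s$; $\mathcal{C}(\pi)$ is a divergent $\mathcal{C}$-coloured trace of $s$ if $\pi$ is an infinite path from $s$ and $\mathcal{C}(\pi)$ is finite. A colouring is consistent if any two states of the same colour have the same $\mathcal{C}$-coloured traces, and a consistent colouring preserves divergence if any two states of the same colour have the same divergent $\mathcal{C}$-coloured traces. $s\leftrightarrow_b^{\Delta}t$ (branching bisimulation equivalence with explicit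 divergence) iff there is a consistent, divergence preserving colouring $\mathcal{C}$ with $\mathcal{C}(s)=\mathcal{C}(t)$. A binary operation $\|$ on $S$ is a merge if for all $s,t,u\in S$ and $a\in\mathrm{Act}$: $s\|t\xrightarrow{a}u$ iff either there is $s'$ with $s\xrightarrow{a}s'$ and $u=s'\|t$, or there is $t'$ with $t\xrightarrow{a}t'$ and $u=s\|t'$. *)

(* Branching bisimulation with explicit divergence via
   consistent, divergence-preserving colourings (van Glabbeek et al.). *)
Set Implicit Arguments.

Section LTS.
Variables (Act : Type) (tau : Act) (St : Type) (step : St -> Act -> St -> Prop).

(* A (finite or infinite) path from s: p n = Some (a_{n+1}, s_{n+1}) is the
   (n+1)-th transition; p n = None means the path has ended (length <= n).
   Definedness is downward closed. *)
Definition pre (s : St) (p : nat -> option (Act * St)) (n : nat) : St :=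
  match n with
  | O => s
  | Datatypes.S n' => match p n' with Some (_, x) => x | None => s end
  end.

Definition is_path (s : St) (p : nat -> option (Act * St)) : Prop :=
  (forall n, p n = None -> p (Datatypes.S n) = None) /\
  (forall n a x, p n = Some (a, x) -> step (pre s p n) a x).

Definition infinite_path (p : nat -> option (Act * St)) : Prop :=
  forall n, p n <> None.

Section Colour.
Variables (K : Type) (C : St -> K).

Definition observable (s : St) (p : nat -> option (Act * St)) (n : nat) : Prop :=
  exists a x, p n = Some (a, x) /\ ~ (a = tau /\ C x = C (pre s p n)).

(* C(p) is the coloured trace (c0, f): initial colour c0 followed by the
   (finite or infinite, downward closed) sequence f of (action, colour) pairs.
   It is obtained by contracting all maximal subsequences C,tau,C,tau,...
   i.e. by deleting exactly the non-observable steps; g enumerates the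
   positions of the observable steps in increasing order. *)
Definition ctrace (s : St) (p : nat -> option (Act * St))
    (c0 : K) (f : nat -> option (Act * K)) : Prop :=
  c0 = C s /\
  (forall k, f k = None -> f (Datatypes.S k) = None) /\
  exists g : nat -> nat,
    (forall k, g k < g (Datatypes.S k)) /\
    (forall k ac, f k = Some ac ->
        observable s p (g k) /\
        exists x, p (g k) = Some (fst ac, x) /\ snd ac = C x) /\
    (forall n, observable s p n -> exists k, g k = n /\ f k <> None).

Definition has_ctrace (s : St) (c0 : K) (f : nat -> option (Act * K)) : Prop :=
  exists p, is_path s p /\ ctrace s p c0 f.

Definition has_div_ctrace (s : St) (c0 : K) (f : nat -> option (Act * K)) : Prop :=
  exists p, is_path s p /\ infinite_path p /\ ctrace s p c0 f /\
            exists k, f k = None.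

Definition consistent : Prop :=
  forall s t, C s = C t ->
    forall c0 f, has_ctrace s c0 f <-> has_ctrace t c0 f.

Definition div_preserving : Prop :=
  forall s t, C s = C t ->
    forall c0 f, has_div_ctrace s c0 f <-> has_div_ctrace t c0 f.
End Colour.

Definition bbisim_div (s t : St) : Prop :=
  exists (K : Type) (C : St -> K),
    consistent C /\ div_preserving C /\ C s = C t.

Definition is_merge (m : St -> St -> St) : Prop :=
  forall s t u a,
    step (m s t) a u <->
    (exists s', step s a s' /\ u = m s' t) \/ (exists t', step t a t' /\ u = m s t').

End LTS.

(* The colourings C1 (for s, t) and C2 (for u, v) combine into a colouring of
   the merged states: relate m a c to m b d whenever C1 a = C1 b and
   C2 c = C2 d, and colour a state by its class under the generated
   equivalence.  By consistency of C1 and C2, a component step of m a c is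
   answered from m b d by an inert tau-chain followed by the matching step, so
   the generating relation is a branching bisimulation for the combined
   colouring; concatenating these answers carries every coloured trace of one
   side to the other.  An infinite inert run of m a c moves its components by
   inert steps only, so one of them diverges; as C1 and C2 preserve
   divergence, so does b or d, which gives the divergent traces. *)

From Stdlib Require Import Arith List Lia Relations Classical ClassicalEpsilon
  FunctionalExtensionality PropExtensionality.
Import ListNotations.
Set Implicit Arguments.

Lemma nondecreasing_le {h : nat -> nat} :
  (forall n, h n <= h (S n)) -> forall n m, n <= m -> h n <= h m.
Proof. intros H n m Hnm. induction Hnm; [lia|]. specialize (H m). lia. Qed.

Lemma bounded_nondecreasing_stable (h : nat -> nat) (B : nat) :
  (forall n, h n <= h (S n)) -> (forall n, h n <= B) ->
  exists M, forall n, M <= n -> h n = h M.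
Proof.
  intros Hmono HB.
  enough (Hk : forall k n0, (forall n, h n <= h n0 + k) ->
                 exists M, forall n, M <= n -> h n = h M)
    by (apply (Hk B 0); intro n; specialize (HB n); lia).
  induction k as [|k IH]; intros n0 Hn0.
  - exists n0. intros n Hn. pose proof (nondecreasing_le Hmono Hn). specialize (Hn0 n). lia.
  - destruct (classic (forall n, n0 <= n -> h n = h n0)) as [Hst|Hst]; [exists n0; exact Hst|].
    apply not_all_ex_not in Hst as [n1 Hn1]. apply imply_to_and in Hn1 as [Hle Hne].
    pose proof (nondecreasing_le Hmono Hle).
    apply (IH n1). intro n. specialize (Hn0 n). lia.
Qed.

Lemma last_cons_default (A : Type) (x : A) l d : last (x :: l) d = last l x.
Proof.
  revert x d. induction l as [|y l IH]; intros x d; [reflexivity|].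
  change (last (y :: l) d = last (y :: l) x). rewrite !IH. reflexivity.
Qed.

Lemma last_map_default (A B : Type) (g : A -> B) l d : last (map g l) (g d) = g (last l d).
Proof.
  revert d. induction l as [|x l IH]; intro d; [reflexivity|].
  simpl map. rewrite !last_cons_default. apply IH.
Qed.

Section Concat.
Variables (A : Type) (seg : nat -> list A).

Fixpoint offset (n : nat) : nat :=
  match n with 0 => 0 | S n' => offset n' + length (seg n') end.

Lemma offset_le n m : n <= m -> offset n <= offset m.
Proof. apply nondecreasing_le. intro; simpl; lia. Qed.

Lemma offset_block_unique {n n' j} :
  offset n <= j < offset (S n) -> offset n' <= j < offset (S n') -> n = n'.
Proof.
  intros H H'. destruct (lt_eq_lt_dec n n') as [[Hlt|Heq]|Hlt]; auto.
  - pose proof (@offset_le (S n) n' Hlt). lia.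
  - pose proof (@offset_le (S n') n Hlt). lia.
Qed.

Lemma offset_block_below {j n} : j < offset n -> exists n', offset n' <= j < offset (S n').
Proof.
  induction n as [|n IH]; intro H; simpl in H; [lia|].
  destruct (Nat.lt_ge_cases j (offset n)) as [Hlt|Hge]; auto.
  exists n. simpl. lia.
Qed.

(* The blocks are located by choice: empty segments mean that the block
   containing position j is not bounded in terms of j. *)
Definition concat_segs (j : nat) : option A :=
  match excluded_middle_informative (exists n, offset n <= j < offset (S n)) with
  | left H => let n := proj1_sig (constructive_indefinite_description _ H) in
              nth_error (seg n) (j - offset n)
  | right _ => None
  end.

Lemma concat_segs_block {n j} :
  offset n <= j < offset (S n) -> concat_segs j = nth_error (seg n) (j - offset n).
Proof.
  intro H. unfold concat_segs. destruct (excluded_middle_informative _) as [H'|H'].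
  - destruct (constructive_indefinite_description _ H') as [n' Hn']. simpl.
    rewrite (offset_block_unique Hn' H). reflexivity.
  - exfalso. eauto.
Qed.

Lemma concat_segs_defined {j n} : j < offset n -> concat_segs j <> None.
Proof.
  intro H. destruct (offset_block_below H) as (n' & Hn').
  rewrite (concat_segs_block Hn'). apply nth_error_Some. simpl in Hn'. lia.
Qed.

Lemma concat_segs_None j : concat_segs j = None <-> forall n, offset n <= j.
Proof.
  split.
  - intros E n. destruct (Nat.lt_ge_cases j (offset n)) as [H|H]; auto.
    exfalso. exact (concat_segs_defined H E).
  - intro H. unfold concat_segs. destruct (excluded_middle_informative _) as [(n & Hn)|_]; auto.
    specialize (H (S n)). lia.
Qed.

Lemma concat_segs_block_of_defined {j} :
  concat_segs j <> None -> exists n, offset n <= j < offset (S n).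
Proof.
  intro E. destruct (classic (exists n, j < offset n)) as [(n & Hn)|H].
  - exact (offset_block_below Hn).
  - exfalso. apply E, concat_segs_None. intro n.
    destruct (Nat.lt_ge_cases j (offset n)); [exfalso; eauto|assumption].
Qed.

End Concat.

Section TransitionSystem.
Variables (Act : Type) (tau : Act) (St : Type) (step : St -> Act -> St -> Prop).

Lemma path_defined_down s p : is_path step s p ->
  forall j k, j <= k -> p k <> None -> p j <> None.
Proof.
  intros [Hdown _] j k Hjk. induction Hjk as [|k Hjk IH]; [auto|].
  intros Hk Hj. apply IH; [|exact Hj]. intro E. apply Hk, Hdown, E.
Qed.

Lemma pre_shift s (p : nat -> option (Act * St)) M k : infinite_path p ->
  pre (pre s p M) (fun i => p (M + i)) k = pre s p (M + k).
Proof.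
  intro Hinf. destruct k as [|k]; [rewrite Nat.add_0_r; reflexivity|].
  rewrite Nat.add_succ_r. simpl.
  destruct (p (M + k)) as [[a t]|] eqn:E; [reflexivity|exfalso; exact (Hinf _ E)].
Qed.

Lemma shift_path s p M : is_path step s p -> infinite_path p ->
  is_path step (pre s p M) (fun i => p (M + i)).
Proof.
  intros Hp Hinf. split.
  - intros k E. exfalso. exact (Hinf _ E).
  - intros k a t E. rewrite pre_shift by exact Hinf. apply (proj2 Hp). exact E.
Qed.

Definition of_list (l : list (Act * St)) : nat -> option (Act * St) :=
  fun i => nth_error l i.

Lemma pre_of_list_cons b t y l o : o <= length l ->
  pre y (of_list ((b, t) :: l)) (S o) = pre t (of_list l) o.
Proof.
  intro Ho. destruct o as [|o]; [reflexivity|]. simpl. unfold of_list.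
  destruct (nth_error l o) as [[c u]|] eqn:E; [reflexivity|].
  apply nth_error_None in E. lia.
Qed.

Section ConcatPaths.
Variables (seg : nat -> list (Act * St)) (ys : nat -> St).
Hypothesis seg_path : forall n, is_path step (ys n) (of_list (seg n)).
Hypothesis seg_end : forall n, pre (ys n) (of_list (seg n)) (length (seg n)) = ys (S n).

Lemma pre_concat_segs_S n o : o < length (seg n) ->
  pre (ys 0) (concat_segs seg) (offset seg n + S o) = pre (ys n) (of_list (seg n)) (S o).
Proof.
  intro Ho. rewrite Nat.add_succ_r. simpl.
  rewrite (@concat_segs_block _ seg n (offset seg n + o)) by (simpl; lia).
  replace (offset seg n + o - offset seg n) with o by lia. unfold of_list.
  destruct (nth_error (seg n) o) as [[c u]|] eqn:E; [reflexivity|].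
  apply nth_error_None in E. lia.
Qed.

Lemma pre_concat_segs_offset n : pre (ys 0) (concat_segs seg) (offset seg n) = ys n.
Proof.
  induction n as [|n IH]; [reflexivity|]. rewrite <- seg_end. simpl offset.
  destruct (length (seg n)) as [|o] eqn:E.
  - rewrite Nat.add_0_r. exact IH.
  - apply pre_concat_segs_S. lia.
Qed.

Lemma pre_concat_segs n o : o <= length (seg n) ->
  pre (ys 0) (concat_segs seg) (offset seg n + o) = pre (ys n) (of_list (seg n)) o.
Proof.
  intro Ho. destruct o as [|o].
  - rewrite Nat.add_0_r. apply pre_concat_segs_offset.
  - apply pre_concat_segs_S. lia.
Qed.

Lemma concat_segs_path : is_path step (ys 0) (concat_segs seg).
Proof.
  split.
  - intros j E. apply concat_segs_None. intro n.
    pose proof (proj1 (concat_segs_None seg j) E n). lia.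
  - intros j a t E.
    assert (Hdef : concat_segs seg j <> None) by congruence.
    destruct (concat_segs_block_of_defined seg Hdef) as (n & Hn).
    rewrite (concat_segs_block seg Hn) in E. simpl in Hn.
    replace j with (offset seg n + (j - offset seg n)) by lia.
    rewrite pre_concat_segs by lia. apply (seg_path n). exact E.
Qed.

End ConcatPaths.

Definition splice (q : nat -> option (Act * St)) (N : nat)
    (r : nat -> option (Act * St)) (j : nat) : option (Act * St) :=
  if j <? N then q j else r (j - N).

Section Splice.
Variables (y : St) (q r : nat -> option (Act * St)) (N : nat).
Hypothesis r_infinite : infinite_path r.

Lemma splice_lt j : j < N -> splice q N r j = q j.
Proof. intro H. unfold splice. apply Nat.ltb_lt in H. rewrite H. reflexivity. Qed.

Lemma splice_ge k : splice q N r (N + k) = r k.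
Proof.
  unfold splice. replace (N + k <? N) with false by (symmetry; apply Nat.ltb_ge; lia).
  f_equal. lia.
Qed.

Lemma pre_splice_le j : j <= N -> pre y (splice q N r) j = pre y q j.
Proof. destruct j as [|j]; [reflexivity|]. intro H. simpl. rewrite splice_lt by lia. reflexivity. Qed.

Lemma pre_splice_ge k : pre y (splice q N r) (N + k) = pre (pre y q N) r k.
Proof.
  destruct k as [|k].
  - rewrite Nat.add_0_r. apply pre_splice_le. lia.
  - rewrite Nat.add_succ_r. simpl. rewrite splice_ge.
    destruct (r k) as [[a t]|] eqn:E; [reflexivity|exfalso; exact (r_infinite E)].
Qed.

Lemma splice_infinite : (forall j, j < N -> q j <> None) -> infinite_path (splice q N r).
Proof.
  intros Hq j. destruct (Nat.lt_ge_cases j N) as [H|H].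
  - rewrite splice_lt by exact H. apply Hq, H.
  - replace j with (N + (j - N)) by lia. rewrite splice_ge. apply r_infinite.
Qed.

Lemma splice_path : is_path step y q -> (forall j, j < N -> q j <> None) ->
  is_path step (pre y q N) r -> is_path step y (splice q N r).
Proof.
  intros Hq Hdef Hr. split.
  - intros j E. exfalso. exact (splice_infinite Hdef j E).
  - intros j a t E. destruct (Nat.lt_ge_cases j N) as [H|H].
    + rewrite pre_splice_le by lia. rewrite splice_lt in E by exact H.
      apply (proj2 Hq). exact E.
    + replace j with (N + (j - N)) in E |- * by lia.
      rewrite pre_splice_ge. rewrite splice_ge in E. apply (proj2 Hr). exact E.
Qed.

End Splice.

Section Colouring.
Variables (K : Type) (C : St -> K).

Lemma not_observable_inert s p n a x : p n = Some (a, x) -> ~ observable tau C s p n ->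
  a = tau /\ C x = C (pre s p n).
Proof. intros Hp Hn. apply NNPP. intro Hc. apply Hn. exists a, x. auto. Qed.

Lemma observable_splice_lt y q r N j : j < N ->
  observable tau C y (splice q N r) j <-> observable tau C y q j.
Proof.
  intro H. unfold observable. rewrite pre_splice_le, splice_lt by lia. reflexivity.
Qed.

Lemma observable_splice_ge y q r N k : infinite_path r ->
  observable tau C y (splice q N r) (N + k) <-> observable tau C (pre y q N) r k.
Proof.
  intro Hr. unfold observable. rewrite pre_splice_ge, splice_ge by exact Hr. reflexivity.
Qed.

Lemma ctrace_splice_inert y q r N c0 f :
  infinite_path r -> (forall j, N <= j -> q j = None) ->
  (forall k, ~ observable tau C (pre y q N) r k) ->
  ctrace tau C y q c0 f -> ctrace tau C y (splice q N r) c0 f.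
Proof.
  intros Hr Hend Hinert (Hc0 & Hf & g & Hg & Hgf & Hgo).
  assert (Hlt : forall j, observable tau C y q j -> j < N).
  { intros j (a & x & E & _). destruct (Nat.lt_ge_cases j N) as [H|H]; auto.
    rewrite Hend in E by exact H. discriminate. }
  split; [exact Hc0|]. split; [exact Hf|]. exists g. split; [exact Hg|]. split.
  - intros k ac E. destruct (Hgf k ac E) as [Ho Hx].
    pose proof (Hlt _ Ho) as HN. rewrite observable_splice_lt, splice_lt by exact HN.
    split; assumption.
  - intros n Ho. destruct (Nat.lt_ge_cases n N) as [H|H].
    + apply Hgo. rewrite <- observable_splice_lt; eassumption.
    + exfalso. apply (Hinert (n - N)). rewrite <- observable_splice_ge by exact Hr.
      replace (N + (n - N)) with n by lia. exact Ho.
Qed.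

Fixpoint tau_chain (y : St) (ts : list St) : Prop :=
  match ts with
  | [] => True
  | t :: ts' => step y tau t /\ C t = C y /\ tau_chain t ts'
  end.

Lemma tau_chain_snoc y ts t : tau_chain y ts ->
  step (last ts y) tau t -> C t = C (last ts y) -> tau_chain y (ts ++ [t]).
Proof.
  revert y. induction ts as [|t0 ts IH]; intros y Hc Hs Ht; rewrite ?last_cons_default in *.
  - simpl. tauto.
  - destruct Hc as (Hs0 & Ht0 & Hc). simpl. auto.
Qed.

Definition divergent (w : St) : Prop :=
  exists p, is_path step w p /\ infinite_path p /\ forall n, ~ observable tau C w p n.

Lemma inert_prefix_tau_chain z q N : is_path step z q ->
  (forall j, j < N -> q j <> None /\ ~ observable tau C z q j) ->
  exists ts, tau_chain z ts /\ last ts z = pre z q N.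
Proof.
  intros [_ Hs] H. induction N as [|N IH].
  - exists []. simpl. auto.
  - destruct IH as (ts & Ht & Hl). { intros j Hj. apply H. lia. }
    destruct (H N ltac:(lia)) as [Hq Ho].
    destruct (q N) as [[a t]|] eqn:E; [|congruence].
    destruct (not_observable_inert E Ho) as [-> Hc].
    exists (ts ++ [t]). split.
    + apply tau_chain_snoc; rewrite ?Hl; auto.
    + rewrite last_last. simpl. rewrite E. reflexivity.
Qed.

(* The one-step path s -a-> s' has coloured trace C s, a, C s' unless the step
   is inert; consistency moves it to any z of the same colour, where it must
   take the form of an inert tau-prefix followed by an a-step. *)
Lemma consistent_transfer {w z a w'} : consistent tau step C ->
  C w = C z -> step w a w' ->
  (a = tau /\ C w' = C w) \/
  exists ts z', tau_chain z ts /\ step (last ts z) a z' /\ C z' = C w'.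
Proof.
  intros Hcons Hwz Hst.
  destruct (classic (a = tau /\ C w' = C w)) as [Hi|Hni]; [left; exact Hi|right].
  set (p := fun n : nat => match n with 0 => Some (a, w') | _ => None end).
  set (f := fun n : nat => match n with 0 => Some (a, C w') | _ => None end).
  assert (Ht : has_ctrace tau step C w (C w) f).
  { exists p. split; [split|split; [reflexivity|split]].
    - intros [|n] Hn; [discriminate|reflexivity].
    - intros [|n] b x E; [|discriminate]. injection E as <- <-. exact Hst.
    - intros [|k] Hk; [discriminate|reflexivity].
    - exists (fun k => k). split; [intro; lia|]. split.
      + intros [|k] ac E; [|discriminate]. injection E as <-.
        split; [exists a, w'; split; [reflexivity|exact Hni]|]. exists w'. auto.
      + intros [|n] (b & x & E & _); [|discriminate].
        exists 0. split; [reflexivity|discriminate]. }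
  apply (Hcons w z Hwz) in Ht. destruct Ht as (q & Hq & _ & _ & g & _ & Hgf & Hgo).
  destruct (Hgf 0 (a, C w') eq_refl) as [_ (z' & Hq0 & Hcz)]. simpl in Hq0, Hcz.
  destruct (@inert_prefix_tau_chain z q (g 0) Hq) as (ts & Htc & Hl).
  { intros j Hj. split.
    - apply (path_defined_down Hq) with (k := g 0); [lia|]. congruence.
    - intro Hoj. destruct (Hgo j Hoj) as ([|k] & Hk & Hfk); [lia|]. auto. }
  exists ts, z'. split; [exact Htc|]. split; [|congruence].
  rewrite Hl. apply (proj2 Hq). exact Hq0.
Qed.

Lemma div_preserving_divergent {w z} : div_preserving tau step C ->
  C w = C z -> divergent w -> divergent z.
Proof.
  intros Hdp Hwz (p & Hp & Hinf & Hno).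
  assert (Ht : has_div_ctrace tau step C w (C w) (fun _ => None)).
  { exists p. split; [exact Hp|]. split; [exact Hinf|]. split; [|exists 0; reflexivity].
    split; [reflexivity|]. split; [auto|]. exists (fun k => k). split; [intro; lia|].
    split; [discriminate|]. intros n Ho. exfalso. exact (Hno n Ho). }
  apply (Hdp w z Hwz) in Ht. destruct Ht as (q & Hq & Hqi & (_ & _ & g & _ & _ & Hgo) & _).
  exists q. split; [exact Hq|]. split; [exact Hqi|].
  intros n Ho. destruct (Hgo n Ho) as (k & _ & Hk). apply Hk; reflexivity.
Qed.

Lemma divergent_tau_step w : divergent w -> exists w', step w tau w' /\ C w' = C w.
Proof.
  intros (p & [_ Hs] & Hinf & Hno).
  destruct (p 0) as [[a t]|] eqn:E; [|exfalso; exact (Hinf 0 E)].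
  destruct (not_observable_inert E (Hno 0)) as [-> Hc].
  exists t. split; [exact (Hs 0 _ _ E)|exact Hc].
Qed.

Lemma divergent_of_tau_invariant {W : St -> Prop} :
  (forall w, W w -> exists w', step w tau w' /\ W w' /\ C w' = C w) ->
  forall w, W w -> divergent w.
Proof.
  intros HW w0 H0.
  assert (Hex : forall w, exists w', W w -> step w tau w' /\ W w' /\ C w' = C w).
  { intro w. destruct (classic (W w)) as [Hw|Hw].
    - destruct (HW w Hw) as (w' & Hw'). exists w'. auto.
    - exists w. tauto. }
  destruct (choice _ Hex) as (F & HF).
  assert (HWi : forall n, W (Nat.iter n F w0)) by (induction n; simpl; auto; apply HF; auto).
  set (p := fun n => Some (tau, Nat.iter (S n) F w0)).
  assert (Hpre : forall n, pre w0 p n = Nat.iter n F w0) by (intros [|n]; reflexivity).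
  exists p. split; [split|split].
  - discriminate.
  - intros n a x E. injection E as <- <-. rewrite Hpre. apply HF; auto.
  - discriminate.
  - intros n (a & x & E & Hn). injection E as <- <-. apply Hn. split; [reflexivity|].
    rewrite Hpre. apply HF; auto.
Qed.


Definition chain_segment (ts : list St) (a : Act) (y' : St) : list (Act * St) :=
  map (fun t => (tau, t)) ts ++ [(a, y')].

Lemma chain_segment_length ts a y' : length (chain_segment ts a y') = S (length ts).
Proof. unfold chain_segment. rewrite length_app, length_map. simpl. lia. Qed.

Lemma chain_segment_not_nil {ts a y'} : chain_segment ts a y' <> [].
Proof. intro E. exact (app_cons_not_nil _ _ _ (eq_sym E)). Qed.

Lemma chain_segment_last ts a y' : of_list (chain_segment ts a y') (length ts) = Some (a, y').
Proof. unfold of_list, chain_segment. induction ts; simpl; auto. Qed.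

Lemma pre_chain_segment_end y ts a y' :
  pre y (of_list (chain_segment ts a y')) (S (length ts)) = y'.
Proof. simpl. rewrite chain_segment_last. reflexivity. Qed.

Lemma chain_segment_inner {y ts} a y' {o} : tau_chain y ts -> o < length ts ->
  exists t, of_list (chain_segment ts a y') o = Some (tau, t) /\ C t = C y.
Proof.
  revert y o. induction ts as [|t ts IH]; intros y o Ht Ho; simpl in *; [lia|].
  destruct Ht as (_ & Hc & Ht). destruct o as [|o]; [exists t; auto|].
  destruct (IH t o Ht ltac:(lia)) as (t' & E & Hc'). exists t'. split; [exact E|congruence].
Qed.

Lemma pre_chain_segment_colour y ts a y' o : tau_chain y ts -> o <= length ts ->
  C (pre y (of_list (chain_segment ts a y')) o) = C y.
Proof.
  revert y o. induction ts as [|t ts IH]; intros y o Ht Ho; simpl in *.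
  - replace o with 0 by lia. reflexivity.
  - destruct Ht as (_ & Hc & Ht). destruct o as [|o]; [reflexivity|].
    unfold chain_segment. simpl map. rewrite <- app_comm_cons, pre_of_list_cons.
    + rewrite IH by (auto; lia). exact Hc.
    + rewrite length_app, length_map. simpl. lia.
Qed.

Lemma chain_segment_path {y ts a y'} : tau_chain y ts -> step (last ts y) a y' ->
  is_path step y (of_list (chain_segment ts a y')).
Proof.
  intros Hc Hl. split.
  - intros n E. unfold of_list in *. apply nth_error_None in E. apply nth_error_None. lia.
  - revert y Hc Hl. induction ts as [|t0 ts IH]; intros y Hc Hl o b t E.
    + destruct o as [|[|o]]; simpl in E; try discriminate. injection E as <- <-. exact Hl.
    + destruct Hc as (Hs & _ & Hc). rewrite last_cons_default in Hl.
      unfold chain_segment in *. simpl map in *. rewrite <- app_comm_cons in *.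
      destruct o as [|o].
      * injection E as <- <-. exact Hs.
      * rewrite pre_of_list_cons; [apply IH; auto|].
        enough (o < length (map (fun t1 : St => (tau, t1)) ts ++ [(a, y')])) by lia.
        apply nth_error_Some. unfold of_list in E. simpl in E. congruence.
Qed.

(* Reindexing of coloured traces along a nondecreasing [h]: step [n] of [p]
   corresponds to step [pred (h (S n))] of [q], i.e. to the last step of the
   block [h n, h (S n)) of [q]. *)
Lemma ctrace_reindex x y p q (h : nat -> nat) c0 f :
  C x = C y -> (forall n, h n <= h (S n)) ->
  (forall n, observable tau C x p n -> exists a x' y',
     p n = Some (a, x') /\ h n < h (S n) /\ q (pred (h (S n))) = Some (a, y') /\
     C y' = C x' /\ observable tau C y q (pred (h (S n)))) ->
  (forall j, observable tau C y q j -> exists n, observable tau C x p n /\ S j = h (S n)) ->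
  ctrace tau C x p c0 f -> ctrace tau C y q c0 f.
Proof.
  intros Hxy Hmono Hfwd Hbwd (Hc0 & Hf & g & Hg & Hgf & Hgo).
  split; [congruence|]. split; [exact Hf|].
  (* beyond the end of [f] the new enumeration only has to stay increasing *)
  exists (fun k => match f k with
                   | Some _ => pred (h (S (g k)))
                   | None => pred (h (S (g k))) + k + 1 end).
  split; [|split].
  - intro k.
    assert (Hle : h (S (g k)) <= h (g (S k))) by (apply nondecreasing_le; [exact Hmono|apply Hg]).
    pose proof (Hmono (g (S k))).
    destruct (f (S k)) as [ac|] eqn:E1.
    + destruct (f k) as [ac0|] eqn:E0; [|rewrite (Hf k E0) in E1; discriminate].
      destruct (Hfwd _ (proj1 (Hgf _ _ E1))) as (? & ? & ? & _ & ? & _).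
      destruct (Hfwd _ (proj1 (Hgf _ _ E0))) as (? & ? & ? & _ & ? & _). lia.
    + destruct (f k); lia.
  - intros k ac Hk. rewrite Hk.
    destruct (Hgf k ac Hk) as [Ho (x0 & Hp & Hc)].
    destruct (Hfwd _ Ho) as (a & x' & y' & Hp' & _ & Hq & Hcy & Hoq).
    rewrite Hp in Hp'. injection Hp' as <- <-.
    split; [exact Hoq|]. exists y'. split; [exact Hq|]. congruence.
  - intros j Hoj. destruct (Hbwd j Hoj) as (n & Hon & Hj).
    destruct (Hgo n Hon) as (k & Hk & Hfk). exists k.
    destruct (f k); [|congruence]. split; [|congruence]. subst n. lia.
Qed.

Section BranchingSimulation.
Variable Q : St -> St -> Prop.
Hypothesis Q_colour : forall x y, Q x y -> C x = C y.
Hypothesis Q_transfer : forall x y a x', Q x y -> step x a x' ->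
  (a = tau /\ Q x' y) \/
  exists ts y', tau_chain y ts /\ step (last ts y) a y' /\ Q x' y'.
Hypothesis Q_divergence : forall x y p, Q x y -> is_path step x p -> infinite_path p ->
  (forall n, exists t, p n = Some (tau, t)) -> (forall n, Q (pre x p n) y) -> divergent y.

Definition response_spec y a x' (r : option (list St * St)) : Prop :=
  match r with
  | None => a = tau /\ Q x' y
  | Some (ts, y') => tau_chain y ts /\ step (last ts y) a y' /\ Q x' y'
  end.

Lemma response_exists x y a x' : exists r, Q x y -> step x a x' -> response_spec y a x' r.
Proof.
  destruct (classic (Q x y /\ step x a x')) as [[Hq Hs]|H].
  - destruct (Q_transfer Hq Hs) as [Hr|(ts & y' & Hr)].
    + exists None. auto.
    + exists (Some (ts, y')). auto.
  - exists None. tauto.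
Qed.

Definition response x y a x' : option (list St * St) :=
  proj1_sig (constructive_indefinite_description _ (response_exists x y a x')).

Lemma response_correct x y a x' : Q x y -> step x a x' -> response_spec y a x' (response x y a x').
Proof. unfold response. destruct (constructive_indefinite_description _ _); auto. Qed.

Section MatchedPath.
Variables (x y : St) (p : nat -> option (Act * St)).
Hypotheses (Hxy : Q x y) (Hp : is_path step x p).

Fixpoint matched_state (n : nat) : St :=
  match n with
  | 0 => y
  | S n' => match p n' with
            | None => matched_state n'
            | Some (a, x') => match response (pre x p n') (matched_state n') a x' with
                              | None => matched_state n'
                              | Some (_, y') => y'
                              end
            end
  end.

Definition matched_segment (n : nat) : list (Act * St) :=
  match p n with
  | None => []
  | Some (a, x') => match response (pre x p n) (matched_state n) a x' with
                    | None => []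
                    | Some (ts, y') => chain_segment ts a y'
                    end
  end.

Local Notation off := (offset matched_segment).

Definition matched_path : nat -> option (Act * St) := concat_segs matched_segment.

Lemma Q_matched_state n : p n <> None -> Q (pre x p n) (matched_state n).
Proof.
  intro Hn. induction n as [|n IH]; [exact Hxy|].
  assert (Hq : Q (pre x p n) (matched_state n)).
  { apply IH. apply (path_defined_down Hp) with (k := S n); [lia|exact Hn]. }
  destruct (p n) as [[a x']|] eqn:E.
  - pose proof (response_correct Hq (proj2 Hp _ _ _ E)) as Hr.
    simpl. rewrite E. destruct (response _ _ a x') as [[ts y']|]; simpl in Hr; tauto.
  - exfalso. apply Hn, (proj1 Hp), E.
Qed.

Lemma matched_segment_cases n :
  (matched_segment n = [] /\ matched_state (S n) = matched_state n /\
     forall a x', p n = Some (a, x') ->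
       a = tau /\ Q x' (matched_state n) /\ Q (pre x p n) (matched_state n)) \/
  (exists a x' ts y', p n = Some (a, x') /\ matched_segment n = chain_segment ts a y' /\
     matched_state (S n) = y' /\ tau_chain (matched_state n) ts /\
     step (last ts (matched_state n)) a y' /\ Q x' y' /\ Q (pre x p n) (matched_state n)).
Proof.
  unfold matched_segment. simpl. destruct (p n) as [[a x']|] eqn:E.
  - assert (Hq : Q (pre x p n) (matched_state n)) by (apply Q_matched_state; congruence).
    pose proof (response_correct Hq (proj2 Hp _ _ _ E)) as Hr.
    destruct (response _ _ a x') as [[ts y']|]; simpl in Hr.
    + right. exists a, x', ts, y'. tauto.
    + left. split; [reflexivity|]. split; [reflexivity|]. intros b y0 E0. injection E0 as <- <-. tauto.
  - left. split; [reflexivity|]. split; [reflexivity|]. discriminate.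
Qed.

Lemma matched_segment_path n : is_path step (matched_state n) (of_list (matched_segment n)).
Proof.
  destruct (matched_segment_cases n) as [(-> & _)|(a & x' & ts & y' & _ & -> & _ & Hc & Hs & _)].
  - split; intros [|k]; discriminate || reflexivity.
  - exact (chain_segment_path Hc Hs).
Qed.

Lemma matched_segment_end n :
  pre (matched_state n) (of_list (matched_segment n)) (length (matched_segment n)) =
  matched_state (S n).
Proof.
  destruct (matched_segment_cases n) as [(-> & -> & _)|(a & x' & ts & y' & _ & -> & -> & _)].
  - reflexivity.
  - rewrite chain_segment_length. apply pre_chain_segment_end.
Qed.

Lemma matched_path_path : is_path step y matched_path.
Proof. exact (concat_segs_path _ _ matched_segment_path matched_segment_end). Qed.

Lemma pre_matched_path n o : o <= length (matched_segment n) ->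
  pre y matched_path (off n + o) = pre (matched_state n) (of_list (matched_segment n)) o.
Proof. intro Ho. exact (pre_concat_segs matched_segment matched_state matched_segment_end n Ho). Qed.

Lemma matched_observable_fwd n : observable tau C x p n ->
  exists a x' y', p n = Some (a, x') /\ off n < off (S n) /\
    matched_path (pred (off (S n))) = Some (a, y') /\ C y' = C x' /\
    observable tau C y matched_path (pred (off (S n))).
Proof.
  intros (a & x' & Ep & Hn).
  destruct (matched_segment_cases n)
    as [(_ & _ & Hinert)|(b & x0 & ts & y' & Ep' & Es & _ & Hc & _ & Hq' & Hq)].
  - exfalso. destruct (Hinert a x' Ep) as (Ha & Hq' & Hq). apply Hn. split; [exact Ha|].
    rewrite (Q_colour Hq'), (Q_colour Hq). reflexivity.
  - rewrite Ep in Ep'. injection Ep' as <- <-.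
    assert (Hoff : off (S n) = off n + S (length ts))
      by (simpl; rewrite Es, chain_segment_length; reflexivity).
    rewrite Hoff. replace (pred (off n + S (length ts))) with (off n + length ts) by lia.
    assert (Eq : matched_path (off n + length ts) = Some (a, y')).
    { unfold matched_path. rewrite (concat_segs_block matched_segment (n := n)) by lia.
      replace (off n + length ts - off n) with (length ts) by lia.
      rewrite Es. apply chain_segment_last. }
    exists a, x', y'. split; [exact Ep|]. split; [lia|]. split; [exact Eq|].
    split; [symmetry; exact (Q_colour Hq')|].
    exists a, y'. split; [exact Eq|]. intros [Ha Hc']. apply Hn. split; [exact Ha|].
    rewrite pre_matched_path, Es, pre_chain_segment_colour in Hc'
      by (rewrite ?Es, ?chain_segment_length; auto; lia).
    rewrite (Q_colour Hq'), (Q_colour Hq). exact Hc'.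
Qed.

Lemma matched_observable_bwd j : observable tau C y matched_path j ->
  exists n, observable tau C x p n /\ S j = off (S n).
Proof.
  intros (b & t & E & Hn).
  assert (Hdef : matched_path j <> None) by congruence.
  destruct (concat_segs_block_of_defined matched_segment Hdef) as (n & Hin).
  unfold matched_path in E. rewrite (concat_segs_block matched_segment Hin) in E.
  destruct (matched_segment_cases n)
    as [(Es & _)|(a & x' & ts & y' & Ep & Es & _ & Hc & _ & Hq' & Hq)].
  - simpl in Hin. rewrite Es in Hin. simpl in Hin. lia.
  - assert (Hoff : off (S n) = off n + S (length ts))
      by (simpl; rewrite Es, chain_segment_length; reflexivity).
    assert (Hpre : C (pre y matched_path j) = C (matched_state n)).
    { replace j with (off n + (j - off n)) by lia.
      rewrite pre_matched_path by (rewrite Es, chain_segment_length; lia).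
      rewrite Es. apply pre_chain_segment_colour; [exact Hc|lia]. }
    destruct (Nat.lt_ge_cases (j - off n) (length ts)) as [Hl|Hl].
    + exfalso. destruct (chain_segment_inner a y' Hc Hl) as (t' & E' & Hc').
      unfold of_list in E'. rewrite Es, E' in E. injection E as <- <-. apply Hn. split; [reflexivity|]. congruence.
    + replace (j - off n) with (length ts) in E by lia.
      rewrite Es in E. change (of_list (chain_segment ts a y') (length ts) = Some (b, t)) in E.
      rewrite chain_segment_last in E. injection E as <- <-.
      exists n. split; [|lia].
      exists a, x'. split; [exact Ep|]. intros [Ha Hcx]. apply Hn. split; [exact Ha|].
      rewrite Hpre, <- (Q_colour Hq), <- Hcx. symmetry. exact (Q_colour Hq').
Qed.

Lemma matched_path_ctrace c0 f : ctrace tau C x p c0 f -> ctrace tau C y matched_path c0 f.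
Proof.
  apply ctrace_reindex with (h := off).
  - exact (Q_colour Hxy).
  - intro n. simpl. lia.
  - exact matched_observable_fwd.
  - exact matched_observable_bwd.
Qed.

Section EventuallyInert.
Hypothesis Hinf : infinite_path p.
Variable M : nat.
Hypothesis off_stable : forall n, M <= n -> off n = off M.

Lemma matched_segment_tail_nil n : M <= n -> matched_segment n = [].
Proof.
  intro Hn. apply length_zero_iff_nil.
  pose proof (off_stable Hn). pose proof (off_stable (n := S n) ltac:(lia)). simpl in *. lia.
Qed.

Lemma matched_state_tail n : M <= n -> matched_state n = matched_state M.
Proof.
  induction n as [|n IH]; intro Hn; [f_equal; lia|].
  destruct (Nat.eq_dec M (S n)) as [<-|Hne]; [reflexivity|].
  rewrite <- IH by lia.
  destruct (matched_segment_cases n) as [(_ & Hs & _)|(a & x' & ts & y' & _ & Es & _)];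
    [exact Hs|].
  exfalso. rewrite matched_segment_tail_nil in Es by lia. exact (chain_segment_not_nil (eq_sym Es)).
Qed.

Lemma matched_tail_inert n : M <= n ->
  (exists t, p n = Some (tau, t)) /\ Q (pre x p n) (matched_state M).
Proof.
  intro Hn. rewrite <- (matched_state_tail Hn).
  destruct (p n) as [[a t]|] eqn:E; [|exfalso; exact (Hinf E)].
  destruct (matched_segment_cases n) as [(_ & _ & Hinert)|(b & x' & ts & y' & _ & Es & _)].
  - destruct (Hinert a t E) as (-> & _ & Hq). eauto.
  - exfalso. rewrite matched_segment_tail_nil in Es by exact Hn.
    exact (chain_segment_not_nil (eq_sym Es)).
Qed.

Lemma matched_state_divergent : divergent (matched_state M).
Proof.
  apply (Q_divergence (x := pre x p M) (p := fun k => p (M + k))).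
  - apply (matched_tail_inert (le_n M)).
  - apply shift_path; assumption.
  - intros k E. exact (Hinf E).
  - intro k. apply matched_tail_inert. lia.
  - intro k. rewrite pre_shift by exact Hinf. apply matched_tail_inert. lia.
Qed.

End EventuallyInert.
End MatchedPath.

Lemma has_ctrace_transfer x y c0 f : Q x y ->
  has_ctrace tau step C x c0 f -> has_ctrace tau step C y c0 f.
Proof.
  intros Hq (p & Hp & Ht). exists (matched_path x y p). split.
  - exact (matched_path_path Hq Hp).
  - exact (matched_path_ctrace Hq Hp Ht).
Qed.

(* If the offsets of the matching path are bounded, the simulated path is
   inert from the stabilisation point [M] on; that divergence transfers to
   [matched_state M] and is appended to the matching path. *)
Lemma has_div_ctrace_transfer x y c0 f : Q x y ->
  has_div_ctrace tau step C x c0 f -> has_div_ctrace tau step C y c0 f.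
Proof.
  intros Hq (p & Hp & Hinf & Ht & Hend).
  set (seg := matched_segment x y p).
  pose proof (matched_path_path Hq Hp) as Hpath.
  destruct (classic (exists B, forall n, offset seg n <= B)) as [(B & HB)|Hunb].
  - destruct (@bounded_nondecreasing_stable (offset seg) B) as (M & HM);
      [intro n; simpl; lia|exact HB|].
    destruct (matched_state_divergent Hq Hp Hinf HM) as (r & Hr & Hri & Hrn).
    assert (Hpre : pre y (matched_path x y p) (offset seg M) = matched_state x y p M)
      by exact (pre_concat_segs_offset seg (matched_state x y p) (matched_segment_end Hq Hp) M).
    exists (splice (matched_path x y p) (offset seg M) r).
    assert (Hdef : forall j, j < offset seg M -> matched_path x y p j <> None)
      by (intros j Hj; exact (concat_segs_defined seg Hj)).
    split; [apply splice_path; [exact Hri|exact Hpath|exact Hdef|rewrite Hpre; exact Hr]|].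
    split; [exact (splice_infinite _ Hri Hdef)|].
    split; [|exact Hend].
    apply ctrace_splice_inert; [exact Hri| |rewrite Hpre; exact Hrn|].
    + intros j Hj. apply concat_segs_None. intro n. change (offset seg n <= j).
      destruct (Nat.le_ge_cases n M) as [Hle|Hge]; [pose proof (offset_le seg Hle)|rewrite HM]; lia.
    + exact (matched_path_ctrace Hq Hp Ht).
  - exists (matched_path x y p). split; [exact Hpath|]. split; [|split; [|exact Hend]].
    + intro j. destruct (classic (exists n, j < offset seg n)) as [(n & Hn)|Hj].
      * exact (concat_segs_defined seg Hn).
      * exfalso. apply Hunb. exists j. intro n.
        destruct (Nat.lt_ge_cases j (offset seg n)); [exfalso; eauto|assumption].
    + exact (matched_path_ctrace Hq Hp Ht).
Qed.

End BranchingSimulation.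
End Colouring.

Section Interleaving.
Variables (K1 K2 : Type) (C1 : St -> K1) (C2 : St -> K2).

Lemma interleaving_divergent {G : nat -> St -> St -> Prop} :
  (forall n a c, G n a c -> exists a' c', G (S n) a' c' /\
     ((step a tau a' /\ C1 a' = C1 a /\ c' = c) \/
      (a' = a /\ step c tau c' /\ C2 c' = C2 c))) ->
  forall n0 a0 c0, G n0 a0 c0 ->
  divergent C1 a0 \/ exists n a c, G n a c /\ divergent C2 c.
Proof.
  intros Hstep n0 a0 c0 H0.
  set (W1 := fun a => exists n c, G n a c).
  destruct (classic (forall a, W1 a -> exists a', step a tau a' /\ W1 a' /\ C1 a' = C1 a))
    as [Hmoves|Hstuck].
  - left. apply (divergent_of_tau_invariant C1 Hmoves). exists n0, c0. exact H0.
  - right. apply not_all_ex_not in Hstuck as [a Ha].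
    apply imply_to_and in Ha as [(n & c & Hg) Hno].
    exists n, a, c. split; [exact Hg|].
    apply (divergent_of_tau_invariant C2 (W := fun c => exists n, G n a c)); [|exists n; exact Hg].
    intros c1 (n1 & Hg1).
    destruct (Hstep _ _ _ Hg1) as (a' & c2 & Hg2 & [(Hs & Hc & _)|(-> & Hs & Hc)]).
    + exfalso. apply Hno. exists a'. split; [exact Hs|]. split; [exists (S n1), c2|]; assumption.
    + exists c2. split; [exact Hs|]. split; [exists (S n1)|]; assumption.
Qed.

End Interleaving.

Section Merge.
Variables (m : St -> St -> St) (Hm : is_merge step m).
Variables (K1 K2 : Type) (C1 : St -> K1) (C2 : St -> K2).
Hypotheses (Hc1 : consistent tau step C1) (Hd1 : div_preserving tau step C1).
Hypotheses (Hc2 : consistent tau step C2) (Hd2 : div_preserving tau step C2).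

Definition merge_rel (x y : St) : Prop :=
  exists a b c d, x = m a c /\ y = m b d /\ C1 a = C1 b /\ C2 c = C2 d.

Definition merge_colour (w : St) : St -> Prop := clos_refl_sym_trans St merge_rel w.

Lemma merge_rel_sym x y : merge_rel x y -> merge_rel y x.
Proof. intros (a & b & c & d & Hx & Hy & Hab & Hcd). exists b, a, d, c. auto. Qed.

Lemma merge_colour_eq x y : clos_refl_sym_trans St merge_rel x y -> merge_colour x = merge_colour y.
Proof.
  intro H. apply functional_extensionality. intro z. apply propositional_extensionality.
  unfold merge_colour. split; intro Hz.
  - apply rst_trans with x; [apply rst_sym|]; assumption.
  - apply rst_trans with y; assumption.
Qed.

Lemma merge_colour_rel x y : merge_rel x y -> merge_colour x = merge_colour y.
Proof. intro H. apply merge_colour_eq, rst_step, H. Qed.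

Lemma merge_colour_equiv x y : merge_colour x = merge_colour y -> clos_refl_sym_trans St merge_rel x y.
Proof. intro H. change (merge_colour x y). rewrite H. apply rst_refl. Qed.

Lemma merge_step_l a c e a' : step a e a' -> step (m a c) e (m a' c).
Proof. intro H. apply Hm. left. eauto. Qed.

Lemma merge_step_r a c e c' : step c e c' -> step (m a c) e (m a c').
Proof. intro H. apply Hm. right. eauto. Qed.

Lemma tau_chain_merge_l b d ts :
  tau_chain C1 b ts -> tau_chain merge_colour (m b d) (map (fun t => m t d) ts).
Proof.
  revert b. induction ts as [|t ts IH]; intros b H; simpl in *; auto.
  destruct H as (Hs & Hc & H). split; [apply merge_step_l, Hs|]. split; [|auto].
  apply merge_colour_rel. exists t, b, d, d. auto.
Qed.

Lemma tau_chain_merge_r b d ts :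
  tau_chain C2 d ts -> tau_chain merge_colour (m b d) (map (fun t => m b t) ts).
Proof.
  revert d. induction ts as [|t ts IH]; intros d H; simpl in *; auto.
  destruct H as (Hs & Hc & H). split; [apply merge_step_r, Hs|]. split; [|auto].
  apply merge_colour_rel. exists b, b, t, d. auto.
Qed.

Lemma merge_rel_transfer x y e x' : merge_rel x y -> step x e x' ->
  (e = tau /\ merge_rel x' y) \/
  exists ts y', tau_chain merge_colour y ts /\ step (last ts y) e y' /\ merge_rel x' y'.
Proof.
  intros (a & b & c & d & -> & -> & Hab & Hcd) Hs.
  apply Hm in Hs as [(a' & Ha & ->)|(c' & Hc & ->)].
  - destruct (consistent_transfer Hc1 Hab Ha) as [[-> Hcol]|(ts & b' & Htc & Hst & Hcol)].
    + left. split; [reflexivity|]. exists a', b, c, d. repeat split; congruence.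
    + right. exists (map (fun t => m t d) ts), (m b' d).
      split; [apply tau_chain_merge_l, Htc|].
      split; [rewrite (last_map_default (fun t => m t d)); apply merge_step_l, Hst|].
      exists a', b', c, d. auto.
  - destruct (consistent_transfer Hc2 Hcd Hc) as [[-> Hcol]|(ts & d' & Htc & Hst & Hcol)].
    + left. split; [reflexivity|]. exists a, b, c', d. repeat split; congruence.
    + right. exists (map (fun t => m b t) ts), (m b d').
      split; [apply tau_chain_merge_r, Htc|].
      split; [rewrite (last_map_default (fun t => m b t)); apply merge_step_r, Hst|].
      exists a, b, c', d'. auto.
Qed.

Lemma merge_tau_response a b c d t : C1 a = C1 b -> C2 c = C2 d -> step (m a c) tau t ->
  (exists a', t = m a' c /\ step a tau a' /\ C1 a' = C1 a) \/
  (exists c', t = m a c' /\ step c tau c' /\ C2 c' = C2 c) \/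
  (exists z, step (m b d) tau z /\ (merge_rel t z \/ merge_rel (m a c) z)).
Proof.
  intros Hab Hcd Hs. apply Hm in Hs as [(a' & Ha & ->)|(c' & Hc & ->)].
  - destruct (consistent_transfer Hc1 Hab Ha) as [[_ Hcol]|([|b1 ts] & b' & Htc & Hst & Hcol)].
    + left. eauto.
    + right; right. exists (m b' d). split; [apply merge_step_l, Hst|].
      left. exists a', b', c, d. auto.
    + right; right. destruct Htc as (Hs1 & Hcol1 & _).
      exists (m b1 d). split; [apply merge_step_l, Hs1|].
      right. exists a, b1, c, d. repeat split; congruence.
  - destruct (consistent_transfer Hc2 Hcd Hc) as [[_ Hcol]|([|d1 ts] & d' & Htc & Hst & Hcol)].
    + right; left. eauto.
    + right; right. exists (m b d'). split; [apply merge_step_r, Hst|].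
      left. exists a, b, c', d'. auto.
    + right; right. destruct Htc as (Hs1 & Hcol1 & _).
      exists (m b d1). split; [apply merge_step_r, Hs1|].
      right. exists a, b, c, d1. repeat split; congruence.
Qed.

(* Suppose [y = m b d] has no tau-step into the set [W] of states related to
   the run (all of which have the colour of [y]).  Then every step of the run
   is an inert step of one component of [m a c], so [a] or [c] diverges, hence
   so does [b] or [d]: a tau-step of [y] into [W] after all. *)
Lemma merge_rel_divergence x y p : merge_rel x y -> is_path step x p -> infinite_path p ->
  (forall n, exists t, p n = Some (tau, t)) -> (forall n, merge_rel (pre x p n) y) ->
  divergent merge_colour y.
Proof.
  intros Hxy Hp Hinf Htau Hall.
  set (W := fun z => exists n, merge_rel (pre x p n) z).
  assert (HWcol : forall z, W z -> merge_colour z = merge_colour y).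
  { intros z (n & Hn). rewrite <- (merge_colour_rel Hn). apply merge_colour_rel, Hall. }
  apply (divergent_of_tau_invariant merge_colour (W := W)); [|exists 0; exact Hxy].
  intros z Hz.
  enough (Hex : exists z', step z tau z' /\ W z').
  { destruct Hex as (z' & Hs & Hw). exists z'. rewrite (HWcol _ Hw), (HWcol _ Hz). auto. }
  apply NNPP. intro Hno.
  destruct Hz as (n0 & a0 & b & c0 & d & Hx0 & -> & Hab0 & Hcd0).
  set (G := fun n a c => pre x p n = m a c /\ C1 a = C1 b /\ C2 c = C2 d).
  assert (HG : forall n a c, G n a c -> exists a' c', G (S n) a' c' /\
     ((step a tau a' /\ C1 a' = C1 a /\ c' = c) \/
      (a' = a /\ step c tau c' /\ C2 c' = C2 c))).
  { intros n a c (Hg & Ha & Hc). destruct (Htau n) as (t & Et).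
    assert (Hpre : pre x p (S n) = t) by (simpl; rewrite Et; reflexivity).
    assert (Hs : step (m a c) tau t) by (rewrite <- Hg; exact (proj2 Hp _ _ _ Et)).
    destruct (merge_tau_response Ha Hc Hs)
      as [(a' & -> & Hs' & Hcol)|[(c' & -> & Hs' & Hcol)|(z & Hz & Hrel)]].
    - exists a', c. split; [repeat split; congruence|left; auto].
    - exists a, c'. split; [repeat split; congruence|right; auto].
    - exfalso. apply Hno. exists z. split; [exact Hz|].
      destruct Hrel as [Hrel|Hrel]; [exists (S n); rewrite Hpre|exists n; rewrite Hg]; exact Hrel. }
  destruct (interleaving_divergent C1 C2 HG n0 a0 c0)
    as [Hdiv|(n & a & c & (_ & _ & Hcd) & Hdiv)]; [repeat split; assumption| |].
  - destruct (divergent_tau_step (div_preserving_divergent Hd1 Hab0 Hdiv)) as (b' & Hs & Hc).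
    apply Hno. exists (m b' d). split; [apply merge_step_l, Hs|].
    exists n0. rewrite Hx0. exists a0, b', c0, d. repeat split; congruence.
  - destruct (divergent_tau_step (div_preserving_divergent Hd2 Hcd Hdiv)) as (d' & Hs & Hc).
    apply Hno. exists (m b d'). split; [apply merge_step_r, Hs|].
    exists n0. rewrite Hx0. exists a0, b, c0, d'. repeat split; congruence.
Qed.

Lemma merge_colour_traces x y : clos_refl_sym_trans St merge_rel x y -> forall c0 f,
  (has_ctrace tau step merge_colour x c0 f <-> has_ctrace tau step merge_colour y c0 f) /\
  (has_div_ctrace tau step merge_colour x c0 f <-> has_div_ctrace tau step merge_colour y c0 f).
Proof.
  induction 1 as [x y H|x|x y _ IH|x y z _ IH1 _ IH2]; intros c0 f.
  - pose proof (merge_rel_sym H) as H'.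
    split; split;
      [eapply has_ctrace_transfer|eapply has_ctrace_transfer
      |eapply has_div_ctrace_transfer|eapply has_div_ctrace_transfer];
      eauto using merge_colour_rel, merge_rel_transfer, merge_rel_divergence.
  - tauto.
  - specialize (IH c0 f). tauto.
  - specialize (IH1 c0 f). specialize (IH2 c0 f). tauto.
Qed.

Lemma merge_colour_consistent : consistent tau step merge_colour.
Proof. intros x y H c0 f. exact (proj1 (merge_colour_traces (merge_colour_equiv H) c0 f)). Qed.

Lemma merge_colour_div_preserving : div_preserving tau step merge_colour.
Proof. intros x y H c0 f. exact (proj2 (merge_colour_traces (merge_colour_equiv H) c0 f)). Qed.

End Merge.
End TransitionSystem.

Theorem theorem5p2 (Act : Type) (tau : Act) (St : Type)
    (step : St -> Act -> St -> Prop) (m : St -> St -> St)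
    (s t u v : St) :
  is_merge step m ->
  bbisim_div tau step s t -> bbisim_div tau step u v ->
  bbisim_div tau step (m s u) (m t v).
Proof.
  intros Hm (K1 & C1 & Hc1 & Hd1 & Hst) (K2 & C2 & Hc2 & Hd2 & Huv).
  exists (St -> Prop), (merge_colour m C1 C2). split; [|split].
  - exact (merge_colour_consistent Hm Hc1 Hd1 Hc2 Hd2).
  - exact (merge_colour_div_preserving Hm Hc1 Hd1 Hc2 Hd2).
  - apply merge_colour_rel. exists s, t, u, v. auto.
Qed.
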